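(* Let $d\geq 2$ and consider a $d$-level system with energies $E_1\leq E_2\leq\dots\leq E_d$. Fix inverse temperatures $\alpha>\beta\geq 0$ and let $\boldsymbol{\gamma}$, $\boldsymbol{\Gamma}$ be the corresponding Gibbs distributions, $\gamma_k=e^{-\alpha E_k}/\sum_{i=1}^d e^{-\alpha E_i}$ and $\Gamma_k=e^{-\beta E_k}/\sum_{i=1}^d e^{-\beta E_i}$. Let $\mathbf{p}$ be a $d$-dimensional probability vector and let $\mathbf{q}$ be any probability vector achievable from $\mathbf{p}$ by the fused operations $\mathcal{F}_{AB}$ (as defined in the context). Then $$q_d\leq M(\mathbf{p}):=\max\left\{p_d,\frac{\Gamma_d}{\Gamma_{d-1}}\right\}.$$ In particular, $M$ is a monotone of the resulting resource theory, i.e., $M(\mathbf{q})\leq M(\mathbf{p})$ whenever $\mathbf{q}$ is achievable from $\mathbf{p}$ via $\mathcal{F}_{AB}$.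
   Context: Incoherent states of the $d$-level system are represented by probability vectors $\mathbf{p}=(p_1,\dots,p_d)$ (occupations of the energy levels). Thermomajorisation relative to a full-support probability vector $\mathbf{g}$: let $\pi$ be a permutation of $\{1,\dots,d\}$ such that $p_{\pi_i}/g_{\pi_i}\geq p_{\pi_{i+1}}/g_{\pi_{i+1}}$ for all $i$; the thermomajorisation curve of $\mathbf{p}$ relative to $\mathbf{g}$ is the piecewise linear curve connecting the points $\left(\sum_{i=1}^j g_{\pi_i},\sum_{i=1}^j p_{\pi_i}\right)$, $j=0,\dots,d$ (with $j=0$ giving $(0,0)$). We write $\mathbf{p}\succ_{\mathbf{g}}\mathbf{q}$ if the curve of $\mathbf{p}$ is nowhere below that of $\mathbf{q}$; this characterises the existence of a thermal operation (at the temperature corresponding to $\mathbf{g}$) mapping $\mathbf{p}$ to $\mathbf{q}$. A state $\mathbf{q}$ is achievable from $\mathbf{p}$ via $\mathcal{F}_{AB}$ if it is a convex combination of vectors $\mathbf{r}$ for which there is a finite chain $\mathbf{p}=\mathbf{r}^{(0)}\succ_{\mathbf{g}_1}\mathbf{r}^{(1)}\succ_{\mathbf{g}_2}\dots\succ_{\mathbf{g}_n}\mathbf{r}^{(n)}=\mathbf{r}$ with each $\mathbf{g}_i\in\{\boldsymbol{\gamma},\boldsymbol{\Gamma}\}$ (i.e., alternately applying thermal operations with respect to the two temperatures). *)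

From HB Require Import structures.
From mathcomp Require Import all_boot all_order all_algebra all_fingroup.
From mathcomp Require Import all_classical all_reals all_analysis.
Set Implicit Arguments. Unset Strict Implicit. Unset Printing Implicit Defensive.
Import Order.TTheory GRing.Theory Num.Theory.
Local Open Scope ring_scope.

(* Vectors of a d-level system are functions nat -> R; only indices 0..d-1
   matter (index k corresponds to the paper's level k+1). *)

Definition prob_vec (R : realType) (d : nat) (p : nat -> R) : Prop :=
  (forall i, (i < d)%N -> 0 <= p i) /\ \sum_(i < d) p i = 1.

Definition gibbs (R : realType) (d : nat) (E : nat -> R) (b : R) : nat -> R :=
  fun k => expR (- (b * E k)) / \sum_(i < d) expR (- (b * E i)).

Definition sorting_perm (R : realType) (d : nat) (p g : nat -> R) (s : 'S_d) : Prop :=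
  forall i j : 'I_d, nat_of_ord j = (nat_of_ord i).+1 ->
    p (s j) / g (s j) <= p (s i) / g (s i).

(* Value at abscissa x of the piecewise-linear curve joining the points
   (sum_{i<=j} g_{s i}, sum_{i<=j} p_{s i}), j = 0..d (with (0,0) first).
   The i-th segment has horizontal extent g_{s i} > 0 and slope
   p_{s i}/g_{s i}; the clamped sum below is exactly this interpolation. *)
Definition tcurve (R : realType) (d : nat) (p g : nat -> R) (s : 'S_d) (x : R) : R :=
  \sum_(i < d) p (s i) *
     Num.min 1 (Num.max 0
       ((x - \sum_(j < d | (nat_of_ord j < nat_of_ord i)%N) g (s j)) / g (s i))).

Definition thermo_maj (R : realType) (d : nat) (g p q : nat -> R) : Prop :=
  prob_vec d p /\ prob_vec d q /\
  exists (s t : 'S_d), sorting_perm p g s /\ sorting_perm q g t /\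
    forall x : R, 0 <= x <= 1 -> tcurve q g t x <= tcurve p g s x.

Inductive chain_reach (R : realType) (d : nat) (gam Gam p : nat -> R) : (nat -> R) -> Prop :=
  | reach_refl : chain_reach d gam Gam p p
  | reach_step_gam : forall r r', chain_reach d gam Gam p r ->
      thermo_maj d gam r r' -> chain_reach d gam Gam p r'
  | reach_step_Gam : forall r r', chain_reach d gam Gam p r ->
      thermo_maj d Gam r r' -> chain_reach d gam Gam p r'.

(* q achievable via F_AB: a convex combination of chain-reachable vectors. *)
Definition achievable (R : realType) (d : nat) (gam Gam p q : nat -> R) : Prop :=
  exists (n : nat) (w : 'I_n -> R) (r : 'I_n -> nat -> R),
    (forall k, 0 <= w k) /\ \sum_(k < n) w k = 1 /\
    (forall k, chain_reach d gam Gam p (r k)) /\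
    forall i, (i < d)%N -> q i = \sum_(k < n) w k * r k i.

(* M(p) = max{ p_d, Gamma_d / Gamma_{d-1} } (0-based: indices d-1, d-2). *)
Definition Mmono (R : realType) (d : nat) (Gam p : nat -> R) : R :=
  Num.max (p d.-1) (Gam d.-1 / Gam d.-2).

From HB Require Import structures.
From mathcomp Require Import all_boot all_order all_algebra all_fingroup.
From mathcomp Require Import all_classical all_reals all_analysis.
From mathcomp Require Import ring lra.
Set Implicit Arguments. Unset Strict Implicit. Unset Printing Implicit Defensive.
Import Order.TTheory GRing.Theory Num.Theory.
Local Open Scope ring_scope.

(* Evaluate both thermomajorisation curves at x = g_d, the smallest Gibbs
   weight, where only their first segments are seen.  The target's curve
   starts with its steepest segment, of slope at least q_d / g_d, so there it
   is at least q_d.  The source's curve is p_(s 0) g_d / g_(s 0): this is p_d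
   if s 0 = d, and at most g_d / g_(d-1) otherwise.  Hence a thermal
   operation at Gibbs state g never raises the last occupation above
   max(p_d, g_d / g_(d-1)).  For Gibbs states this ratio is
   exp(b (E_(d-1) - E_d)), which decreases in b, so operations at either
   temperature respect the bound with the hotter ratio, and so do convex
   combinations. *)

Lemma prob_vec_le1 (R : realType) (d : nat) (r : nat -> R) (k : nat) :
  prob_vec d r -> (k < d)%N -> r k <= 1.
Proof.
move=> [r_ge0 <-] kd.
by rewrite (bigD1 (Ordinal kd)) //= lerDl sumr_ge0 // => i _; apply: r_ge0.
Qed.

Lemma convex_comb_le (R : realType) (m : nat) (w x : 'I_m -> R) (c : R) :
  (forall k, 0 <= w k) -> \sum_(k < m) w k = 1 -> (forall k, x k <= c) ->
  \sum_(k < m) w k * x k <= c.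
Proof.
move=> w_ge0 w_sum1 x_le; rewrite -[leRHS]mul1r -w_sum1 mulr_suml.
by apply: ler_sum => k _; apply: ler_wpM2l.
Qed.

Section ThermoCurve.
Variables (R : realType) (n : nat) (g : nat -> R).

Lemma sorting_perm_head_max (r : nat -> R) (t : 'S_n.+1) (i : 'I_n.+1) :
  sorting_perm r g t -> r (t i) / g (t i) <= r (t ord0) / g (t ord0).
Proof.
move=> t_sorted; case: i => m; elim: m => [|m IH] lt_m.
  by rewrite (_ : Ordinal lt_m = ord0) //; apply: val_inj.
have lt_m' : (m < n.+1)%N := ltnW lt_m.
exact: le_trans (t_sorted (Ordinal lt_m') (Ordinal lt_m) erefl) (IH lt_m').
Qed.

Hypothesis g_gt0 : forall k, (k < n.+1)%N -> 0 < g k.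

Lemma tcurve_first_segment (r : nat -> R) (s : 'S_n.+1) (x : R) :
  0 <= x -> (forall k, (k < n.+1)%N -> x <= g k) ->
  tcurve r g s x = r (s ord0) * (x / g (s ord0)).
Proof.
move=> x_ge0 x_le_g; rewrite /tcurve (bigD1 ord0) //=.
rewrite big_pred0 => [|j]; last by rewrite ltn0.
have g_s0 := g_gt0 (ltn_ord (s ord0)).
rewrite subr0 max_r ?min_r ?divr_ge0 ?(ltW g_s0) //; last first.
  by rewrite ler_pdivrMr // mul1r x_le_g.
rewrite big1 ?addr0 // => i i_neq0.
have g_si := g_gt0 (ltn_ord (s i)).
suff past_x : x <= \sum_(j < n.+1 | (j < i)%N) g (s j).
  by rewrite max_l ?min_r ?mulr0 // pmulr_lle0 ?invr_gt0 // subr_le0.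
rewrite (bigD1 ord0) ?lt0n //= (le_trans (x_le_g _ (ltn_ord (s ord0)))) //.
by rewrite lerDl sumr_ge0 // => j _; apply/ltW/g_gt0.
Qed.

End ThermoCurve.

Section LastLevel.
Variables (R : realType) (n : nat) (g : nat -> R).
Hypothesis g_gt0 : forall k, (k < n.+2)%N -> 0 < g k.
Hypothesis g_anti : forall i j, (i <= j)%N -> (j < n.+2)%N -> g j <= g i.

Let g_last_gt0 : 0 < g n.+1 := g_gt0 (ltnSn n.+1).

Let g_last_min k : (k < n.+2)%N -> g n.+1 <= g k.
Proof. by move=> kd; apply: g_anti => //; rewrite -ltnS. Qed.

Lemma tcurve_last_ge (r : nat -> R) (t : 'S_n.+2) :
  sorting_perm r g t -> r n.+1 <= tcurve r g t (g n.+1).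
Proof.
move=> t_sorted.
rewrite (tcurve_first_segment g_gt0 _ _ (ltW g_last_gt0) g_last_min) mulrA mulrAC.
have := sorting_perm_head_max ((t^-1)%g ord_max) t_sorted.
rewrite permKV /= => head_max.
rewrite -[leLHS](divfK (lt0r_neq0 g_last_gt0)).
exact: ler_wpM2r (ltW g_last_gt0) _ _ head_max.
Qed.

Lemma tcurve_last_le (r : nat -> R) (s : 'S_n.+2) :
  prob_vec n.+2 r -> tcurve r g s (g n.+1) <= Num.max (r n.+1) (g n.+1 / g n).
Proof.
move=> r_prob.
rewrite (tcurve_first_segment g_gt0 _ _ (ltW g_last_gt0) g_last_min).
have g_s0 := g_gt0 (ltn_ord (s ord0)).
have [-> | s0_neq] := eqVneq (s ord0) ord_max.
  by rewrite /= divff ?mulr1 ?le_max ?lexx ?gt_eqF.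
have s0_le_n : (s ord0 <= n)%N.
  move: (ltn_ord (s ord0)); rewrite ltnS leq_eqVlt => /predU1P [s0_last | //].
  by case/eqP: s0_neq; apply: val_inj.
rewrite le_max; apply/orP; right; rewrite -[leRHS]mul1r; apply: ler_pM.
- by case: r_prob => + _; apply.
- by rewrite divr_ge0 ?ltW ?g_gt0.
- exact: prob_vec_le1 r_prob (ltn_ord _).
rewrite ler_pM2l ?g_gt0 // lef_pV2 ?posrE ?g_gt0 //.
exact: g_anti s0_le_n (leqW (ltnSn n)).
Qed.

Lemma thermo_maj_last_le (r r' : nat -> R) :
  g n.+1 <= 1 -> thermo_maj n.+2 g r r' ->
  r' n.+1 <= Num.max (r n.+1) (g n.+1 / g n).
Proof.
move=> g_le1 [r_prob [_ [s [t [_ [t_sorted curve_le]]]]]].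
apply: le_trans (tcurve_last_ge t_sorted) _.
apply: le_trans (tcurve_last_le s r_prob).
by apply: curve_le; rewrite g_le1 ltW.
Qed.

End LastLevel.

Section Gibbs.
Variables (R : realType) (n : nat) (E : nat -> R).

Let Z (b : R) := \sum_(i < n.+1) expR (- (b * E i)).

Let expR_le_Z (b : R) (k : nat) : (k < n.+1)%N -> expR (- (b * E k)) <= Z b.
Proof.
by move=> kd; rewrite /Z (bigD1 (Ordinal kd)) //= lerDl sumr_ge0 // => i _.
Qed.

Let Z_gt0 (b : R) : 0 < Z b.
Proof. exact: lt_le_trans (expR_gt0 _) (expR_le_Z b (ltn0Sn n)). Qed.

Lemma gibbs_gt0 (b : R) (k : nat) : 0 < gibbs n.+1 E b k.
Proof. exact: divr_gt0 (expR_gt0 _) (Z_gt0 b). Qed.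

Lemma gibbs_le1 (b : R) (k : nat) : (k < n.+1)%N -> gibbs n.+1 E b k <= 1.
Proof. by move=> kd; rewrite ler_pdivrMr ?(Z_gt0 b) // mul1r expR_le_Z. Qed.

Lemma gibbs_ratio (b : R) (i j : nat) :
  gibbs n.+1 E b j / gibbs n.+1 E b i = expR (b * (E i - E j)).
Proof.
have Z_neq0 : Z b != 0 := lt0r_neq0 (Z_gt0 b).
have e_neq0 : expR (- (b * E i)) != 0 := lt0r_neq0 (expR_gt0 _).
rewrite (_ : b * (E i - E j) = - (b * E j) - - (b * E i)); last by ring.
by rewrite expRB /gibbs -/(Z b); field; rewrite Z_neq0 e_neq0.
Qed.

Lemma gibbs_ratio_le (a b : R) (i j : nat) : E i <= E j -> b <= a ->
  gibbs n.+1 E a j / gibbs n.+1 E a i <= gibbs n.+1 E b j / gibbs n.+1 E b i.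
Proof. by move=> Eij ba; rewrite !gibbs_ratio ler_expR; nra. Qed.

Hypothesis E_mono : forall i j, (i <= j)%N -> (j < n.+1)%N -> E i <= E j.

Lemma gibbs_anti (b : R) (i j : nat) : 0 <= b -> (i <= j)%N -> (j < n.+1)%N ->
  gibbs n.+1 E b j <= gibbs n.+1 E b i.
Proof.
move=> b_ge0 ij jd.
rewrite ler_pM2r ?invr_gt0 ?(Z_gt0 b) // ler_expR lerN2.
exact: ler_wpM2l b_ge0 _ _ (E_mono ij jd).
Qed.

End Gibbs.

Section Chain.
Variables (R : realType) (n : nat) (E : nat -> R) (alpha beta : R).
Hypothesis E_mono : forall i j, (i <= j)%N -> (j < n.+2)%N -> E i <= E j.
Hypothesis beta_ge0 : 0 <= beta.
Hypothesis beta_le_alpha : beta <= alpha.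

Lemma thermo_maj_gibbs_last_le (a : R) (r r' : nat -> R) :
  beta <= a -> thermo_maj n.+2 (gibbs n.+2 E a) r r' ->
  r' n.+1 <= Mmono n.+2 (gibbs n.+2 E beta) r.
Proof.
move=> beta_le_a maj.
have a_ge0 := le_trans beta_ge0 beta_le_a.
have ratio_le := gibbs_ratio_le n.+1 (E_mono (leqnSn n) (ltnSn _)) beta_le_a.
apply: le_trans (thermo_maj_last_le _ _ (gibbs_le1 _ _ (ltnSn _)) maj) _.
- by move=> k _; apply: gibbs_gt0.
- by move=> i j; apply: gibbs_anti.
by rewrite /Mmono /= ge_max !le_max lexx ratio_le !orbT.
Qed.

Lemma chain_reach_last_le (p r : nat -> R) :
  chain_reach n.+2 (gibbs n.+2 E alpha) (gibbs n.+2 E beta) p r ->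
  r n.+1 <= Mmono n.+2 (gibbs n.+2 E beta) p.
Proof.
elim=> [|r1 r2 _ IH maj|r1 r2 _ IH maj]; first by rewrite le_max lexx.
- apply: le_trans (thermo_maj_gibbs_last_le beta_le_alpha maj) _.
  by rewrite ge_max IH le_max lexx orbT.
- apply: le_trans (thermo_maj_gibbs_last_le (lexx _) maj) _.
  by rewrite ge_max IH le_max lexx orbT.
Qed.

End Chain.

Theorem theorem1 (R : realType) (d : nat) (E : nat -> R) (alpha beta : R)
    (p q : nat -> R) :
  (2 <= d)%N ->
  (forall i j, (i <= j)%N -> (j < d)%N -> E i <= E j) ->
  0 <= beta -> beta < alpha ->
  prob_vec d p -> prob_vec d q ->
  achievable d (gibbs d E alpha) (gibbs d E beta) p q ->
  q d.-1 <= Mmono d (gibbs d E beta) p /\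
  Mmono d (gibbs d E beta) q <= Mmono d (gibbs d E beta) p.
Proof.
case: d => [|[|n]] // _ E_mono beta_ge0 beta_lt_alpha _ _.
move=> [m [w [r [w_ge0 [w_sum1 [r_reach q_def]]]]]].
have q_last : q n.+1 <= Mmono n.+2 (gibbs n.+2 E beta) p.
  rewrite q_def //; apply: convex_comb_le => // k.
  exact: (chain_reach_last_le E_mono beta_ge0 (ltW beta_lt_alpha) (r_reach k)).
by split; rewrite // ge_max q_last le_max lexx orbT.
Qed.
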